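(* For every $\delta$-algebra $A$, the homomorphism $\eta_A\colon A\to C(\mathrm{Max}\,A,[0,1])$, $a\mapsto\hat a$, is an epimorphism in the category $\Delta$ of $\delta$-algebras and $\delta$-homomorphisms.
   Context: An MV-algebra is an algebra $(A,\oplus,\neg,0)$ of type $(2,1,0)$ such that $(A,\oplus,0)$ is a commutative monoid, $\neg\neg a=a$, $a\oplus\neg 0=\neg 0$, and $\neg(\neg a\oplus b)\oplus b=\neg(\neg b\oplus a)\oplus a$. Derived operations: $1:=\neg 0$, $a\odot b:=\neg(\neg a\oplus\neg b)$, $a\ominus b:=a\odot\neg b$, $a\vee b:=\neg(\neg a\oplus b)\oplus b$ (join of a lattice order $\le$), $d(a,b):=(a\ominus b)\oplus(b\ominus a)$. Let $\mathcal{L}=\{\delta,\oplus,\neg,0\}$ of type $(\omega,2,1,0)$; $\tfrac12(x):=\delta(x,0,0,\dots)$. A $\delta$-algebra is an $\mathcal{L}$-algebra whose MV-reduct is an MV-algebra and satisfying for all $x,y,\vec x,\vec y$: (i) $d(\delta(\vec x),\delta(x_1,0,0,\dots))=\delta(0,x_2,x_3,\dots)$; (ii) $\tfrac12(\delta(\vec x))=\delta(\tfrac12(x_1),\tfrac12(x_2),\dots)$; (iii) $\delta(x,x,\dots)=x$; (iv) $\delta(0,\vec x)=\tfrac12(\delta(\vec x))$; (v) $\delta(\vec x)\le\delta(x_1\oplus y_1,x_2\oplus y_2,\dots)$; (vi) $\tfrac12(x\ominus y)=\tfrac12(x)\ominus\tfrac12(y)$. A $\delta$-homomorphism is a map preserving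 $\delta,\oplus,\neg,0$. $[0,1]$ is the standard $\delta$-algebra with $x\oplus y=\min\{1,x+y\}$, $\neg x=1-x$, $\delta(\vec x)=\sum_i x_i/2^i$. For a compact Hausdorff space $X$, $C(X,[0,1])$ is the $\delta$-algebra of continuous maps $X\to[0,1]$ with pointwise MV-operations and $\delta(\vec{\mathbf g}):=\sum_{i\ge1}\mathbf g_i/2^i$ (a uniformly convergent series). For a $\delta$-algebra $A$, $\mathrm{Max}\,A$ is the set of MV-algebra homomorphisms $A\to[0,1]$ with the subspace topology of $[0,1]^A$ (compact Hausdorff); for $a\in A$, $\hat a\colon\mathrm{Max}\,A\to[0,1]$, $\hat a(h):=h(a)$. *)

From Stdlib Require Import Reals List.
From Coquelicot Require Import Coquelicot.
Open Scope R_scope.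

(* Raw signature of type (omega,2,1,0).  Sequences (x_1,x_2,...) are
   represented as s : nat -> A with s 0 = x_1. *)
Record deltaSig := {
  dcar :> Type;
  dplus : dcar -> dcar -> dcar;
  dneg : dcar -> dcar;
  dzero : dcar;
  ddelta : (nat -> dcar) -> dcar
}.

Section Derived.
Variable A : deltaSig.
Definition done : A := dneg A (dzero A).
Definition dodot (a b : A) : A := dneg A (dplus A (dneg A a) (dneg A b)).
Definition dominus (a b : A) : A := dodot a (dneg A b).
Definition djoin (a b : A) : A := dplus A (dneg A (dplus A (dneg A a) b)) b.
Definition dle (a b : A) : Prop := djoin a b = b.
Definition ddist (a b : A) : A := dplus A (dominus a b) (dominus b a).
Definition dhalf (x : A) : A :=
  ddelta A (fun n => match n with O => x | S _ => dzero A end).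

Definition isMV : Prop :=
  (forall x y z : A, dplus A x (dplus A y z) = dplus A (dplus A x y) z) /\
  (forall x y : A, dplus A x y = dplus A y x) /\
  (forall x : A, dplus A x (dzero A) = x) /\
  (forall x : A, dneg A (dneg A x) = x) /\
  (forall x : A, dplus A x (dneg A (dzero A)) = dneg A (dzero A)) /\
  (forall x y : A, dplus A (dneg A (dplus A (dneg A x) y)) y
                 = dplus A (dneg A (dplus A (dneg A y) x)) x).

Definition isDeltaAlgebra : Prop :=
  isMV /\
  (* (i) *)
  (forall s : nat -> A,
     ddist (ddelta A s) (ddelta A (fun n => match n with O => s O | S _ => dzero A end))
     = ddelta A (fun n => match n with O => dzero A | S _ => s n end)) /\
  (* (ii) *)
  (forall s : nat -> A, dhalf (ddelta A s) = ddelta A (fun n => dhalf (s n))) /\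
  (* (iii) *)
  (forall x : A, ddelta A (fun _ => x) = x) /\
  (* (iv) *)
  (forall s : nat -> A,
     ddelta A (fun n => match n with O => dzero A | S m => s m end) = dhalf (ddelta A s)) /\
  (* (v) *)
  (forall s t : nat -> A, dle (ddelta A s) (ddelta A (fun n => dplus A (s n) (t n)))) /\
  (* (vi) *)
  (forall x y : A, dhalf (dominus x y) = dominus (dhalf x) (dhalf y)).
End Derived.

Record deltaAlgebra := {
  dsig :> deltaSig;
  daxioms : isDeltaAlgebra dsig
}.

Definition uplus (x y : R) : R := Rmin 1 (x + y).
Definition uneg (x : R) : R := 1 - x.

Definition isMVhomTo01 (A : deltaSig) (h : A -> R) : Prop :=
  (forall a, 0 <= h a <= 1) /\
  (forall a b, h (dplus A a b) = uplus (h a) (h b)) /\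
  (forall a, h (dneg A a) = uneg (h a)) /\
  h (dzero A) = 0.

Definition MaxA (A : deltaSig) : Type := {h : A -> R | isMVhomTo01 A h}.

(* Continuity of F : Max A -> R for the subspace topology of the product
   topology on [0,1]^A, written out via basic product neighbourhoods
   (finitely many coordinates). *)
Definition contMax (A : deltaSig) (F : MaxA A -> R) : Prop :=
  forall (h : MaxA A) (eps : R), 0 < eps ->
    exists (l : list A) (d : R), 0 < d /\
      forall h' : MaxA A,
        (forall a, In a l -> Rabs (proj1_sig h' a - proj1_sig h a) < d) ->
        Rabs (F h' - F h) < eps.

Definition inC (A : deltaSig) (F : MaxA A -> R) : Prop :=
  contMax A F /\ forall h, 0 <= F h <= 1.

Definition Cplus (A : deltaSig) (F G : MaxA A -> R) : MaxA A -> R :=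
  fun h => uplus (F h) (G h).
Definition Cneg (A : deltaSig) (F : MaxA A -> R) : MaxA A -> R :=
  fun h => uneg (F h).
Definition Czero (A : deltaSig) : MaxA A -> R := fun _ => 0.
Definition Cdelta (A : deltaSig) (s : nat -> MaxA A -> R) : MaxA A -> R :=
  fun h => Series (fun n => s n h / 2 ^ (S n)).

Definition hat (A : deltaSig) (a : A) : MaxA A -> R := fun h => proj1_sig h a.

(* delta-homomorphisms C(Max A,[0,1]) -> B, given as maps on the ambient
   function space whose behaviour is only constrained on C(Max A,[0,1]). *)
Definition isDeltaHomFromC (A : deltaSig) (B : deltaSig)
    (f : (MaxA A -> R) -> B) : Prop :=
  (forall F G, inC A F -> inC A G -> f (Cplus A F G) = dplus B (f F) (f G)) /\
  (forall F, inC A F -> f (Cneg A F) = dneg B (f F)) /\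
  f (Czero A) = dzero B /\
  (forall s : nat -> MaxA A -> R, (forall n, inC A (s n)) ->
     f (Cdelta A s) = ddelta B (fun n => f (s n))).

Definition etaIsDeltaHom (A : deltaSig) : Prop :=
  (forall a, inC A (hat A a)) /\
  (forall a b, hat A (dplus A a b) = Cplus A (hat A a) (hat A b)) /\
  (forall a, hat A (dneg A a) = Cneg A (hat A a)) /\
  hat A (dzero A) = Czero A /\
  (forall s : nat -> A, hat A (ddelta A s) = Cdelta A (fun n => hat A (s n))).

(* The proof shows that eta_A is a surjective delta-homomorphism; two
   delta-homomorphisms out of C(Max A,[0,1]) that agree on its image then agree
   everywhere. *)

From Stdlib Require Import Reals List.
From Coquelicot Require Import Coquelicot.
From Stdlib Require Import Lra Classical FunctionalExtensionality.
From Stdlib Require Import ProofIrrelevance IndefiniteDescription.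
From HB Require Import structures.
From mathcomp Require all_boot all_order all_algebra all_classical all_reals.
From mathcomp Require topology normedtype Rstruct Rstruct_topology.
Open Scope R_scope.

Ltac case_minmax :=
  unfold Rmin, Rmax in *;
  repeat match goal with
  | |- context [Rle_dec ?a ?b] => destruct (Rle_dec a b)
  | H : context [Rle_dec ?a ?b] |- _ => destruct (Rle_dec a b)
  end; try lra.

Section MVTerms.
Variable A : deltaSig.

Definition dmeet (a b : A) : A := dneg A (djoin A (dneg A a) (dneg A b)).

Fixpoint nfold (n : nat) (a : A) : A :=
  match n with O => dzero A | S m => dplus A a (nfold m a) end.

Fixpoint bigjoin (l : list A) : A :=
  match l with nil => dzero A | a :: l' => djoin A a (bigjoin l') end.
Fixpoint bigmeet (l : list A) : A :=
  match l with nil => done A | a :: l' => dmeet a (bigmeet l') end.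
End MVTerms.

Section MVHom.
Variables (A : deltaSig) (h : A -> R).
Hypothesis Hh : isMVhomTo01 A h.

Lemma h_range a : 0 <= h a <= 1. Proof. apply Hh. Qed.
Lemma h_plus a b : h (dplus A a b) = Rmin 1 (h a + h b). Proof. apply Hh. Qed.
Lemma h_neg a : h (dneg A a) = 1 - h a. Proof. apply Hh. Qed.
Lemma h_zero : h (dzero A) = 0. Proof. apply Hh. Qed.
Lemma h_one : h (done A) = 1. Proof. unfold done. rewrite h_neg, h_zero. lra. Qed.

Lemma h_ominus a b : h (dominus A a b) = Rmax 0 (h a - h b).
Proof.
  unfold dominus, dodot. rewrite !h_neg, h_plus, !h_neg.
  pose proof (h_range a); pose proof (h_range b). case_minmax.
Qed.

Lemma h_join a b : h (djoin A a b) = Rmax (h a) (h b).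
Proof.
  unfold djoin. rewrite h_plus, h_neg, h_plus, h_neg.
  pose proof (h_range a); pose proof (h_range b). case_minmax.
Qed.

Lemma h_meet a b : h (dmeet A a b) = Rmin (h a) (h b).
Proof.
  unfold dmeet. rewrite h_neg, h_join, !h_neg.
  pose proof (h_range a); pose proof (h_range b). case_minmax.
Qed.

Lemma h_dist a b : h (ddist A a b) = Rabs (h a - h b).
Proof.
  unfold ddist. rewrite h_plus, !h_ominus.
  pose proof (h_range a); pose proof (h_range b).
  unfold Rabs; destruct (Rcase_abs (h a - h b)); case_minmax.
Qed.

Lemma h_le a b : dle A a b -> h a <= h b.
Proof. unfold dle. intro H. rewrite <- H, h_join. apply Rmax_l. Qed.

Lemma h_nfold n a : h (nfold A n a) = Rmin 1 (INR n * h a).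
Proof.
  induction n as [|n IH]; simpl nfold.
  - rewrite h_zero. simpl. case_minmax.
  - rewrite h_plus, IH, S_INR. pose proof (h_range a). pose proof (pos_INR n).
    assert (0 <= INR n * h a) by (apply Rmult_le_pos; lra). case_minmax; nra.
Qed.

Lemma h_nfold_exact n a : INR n * h a <= 1 -> h (nfold A n a) = INR n * h a.
Proof. intro H. rewrite h_nfold. case_minmax. Qed.

Lemma h_bigjoin_ge a l : In a l -> h a <= h (bigjoin A l).
Proof.
  induction l as [|b l IH]; simpl; [tauto|]. rewrite h_join.
  intros [<-|Hin]; [apply Rmax_l|]. eapply Rle_trans; [apply IH, Hin|apply Rmax_r].
Qed.

Lemma h_bigjoin_lt c l : 0 < c -> (forall a, In a l -> h a < c) -> h (bigjoin A l) < c.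
Proof.
  intros Hc. induction l as [|b l IH]; simpl; intro Hl.
  - rewrite h_zero. exact Hc.
  - rewrite h_join. apply Rmax_lub_lt; auto.
Qed.

Lemma h_bigmeet_le a l : In a l -> h (bigmeet A l) <= h a.
Proof.
  induction l as [|b l IH]; simpl; [tauto|]. rewrite h_meet.
  intros [<-|Hin]; [apply Rmin_l|]. eapply Rle_trans; [apply Rmin_r|apply IH, Hin].
Qed.

Lemma h_bigmeet_gt c l : c < 1 -> (forall a, In a l -> c < h a) -> c < h (bigmeet A l).
Proof.
  intros Hc. induction l as [|b l IH]; simpl; intro Hl.
  - rewrite h_one. exact Hc.
  - rewrite h_meet. apply Rmin_glb_lt; auto.
Qed.
End MVHom.

Lemma two_pow_pos n : 0 < 2 ^ n.
Proof. apply pow_lt. lra. Qed.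

Lemma inv_pow2_S n : / 2 ^ S n = / 2 ^ n / 2.
Proof. simpl. pose proof (two_pow_pos n). field. lra. Qed.

Lemma inv_pow2_lim : is_lim_seq (fun n => / 2 ^ S n) 0.
Proof.
  apply is_lim_seq_ext with (fun n => (/2) ^ S n).
  { intro n. apply pow_inv. }
  apply (is_lim_seq_incr_1 (fun n => (/2) ^ n)), is_lim_seq_geom.
  rewrite Rabs_pos_eq; lra.
Qed.

Lemma series_of_halving (x t : nat -> R) : (forall n, 0 <= t n <= 1) ->
  (forall n, t n = x n / 2 + t (S n) / 2) ->
  is_series (fun n => x n / 2 ^ S n) (t O).
Proof.
  intros Ht Hrec.
  assert (Hpart : forall n, sum_n (fun k => x k / 2 ^ S k) n = t O - t (S n) / 2 ^ S n).
  { induction n as [|n IH].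
    - rewrite sum_O, (Hrec O). simpl. field.
    - rewrite sum_Sn, IH, (Hrec (S n)). pose proof (two_pow_pos n).
      change (plus ?a ?b) with (a + b). simpl. field. lra. }
  enough (H : is_lim_seq (sum_n (fun k => x k / 2 ^ S k)) (t O)) by exact H.
  apply is_lim_seq_ext with (fun n => t O - t (S n) / 2 ^ S n).
  { intro n. symmetry. apply Hpart. }
  assert (Htail : is_lim_seq (fun n => t (S n) / 2 ^ S n) 0).
  { apply is_lim_seq_le_le with (fun _ => 0) (fun n => / 2 ^ S n);
      [|apply is_lim_seq_const|apply inv_pow2_lim].
    intro n. pose proof (two_pow_pos (S n)). destruct (Ht (S n)). split.
    - apply Rdiv_le_0_compat; lra.
    - unfold Rdiv. rewrite <- (Rmult_1_l (/ 2 ^ S n)) at 2.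
      apply Rmult_le_compat_r; [apply Rlt_le, Rinv_0_lt_compat|]; lra. }
  pose proof (is_lim_seq_minus' _ _ _ _ (is_lim_seq_const (t O)) Htail) as H.
  rewrite Rminus_0_r in H. exact H.
Qed.

Lemma series_of_increments (u : nat -> R) (L : R) : is_lim_seq u L ->
  is_series (fun k => u (S k) - u k) (L - u O).
Proof.
  intro Hu.
  enough (H : is_lim_seq (sum_n (fun k => u (S k) - u k)) (L - u O)) by exact H.
  apply is_lim_seq_ext with (fun n => u (S n) - u O).
  { intro n. induction n as [|n IH]; [rewrite sum_O; reflexivity|].
    rewrite sum_Sn, <- IH. change (plus ?a ?b) with (a + b). ring. }
  apply is_lim_seq_minus'; [apply (is_lim_seq_incr_1 u), Hu|apply is_lim_seq_const].
Qed.

Section DeltaValues.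
Variable A : deltaAlgebra.

(* [1/2 s_1 <= delta(s)]: axiom (v) for [(s_1,0,0,...)] and [(0,s_2,s_3,...)]. *)
Lemma half_head_le (s : nat -> A) : dle A (dhalf A (s O)) (ddelta A s).
Proof.
  destruct (daxioms A) as [[_ [Hcomm [Hzero _]]] [_ [_ [_ [_ [Hmono _]]]]]].
  pose proof (Hmono (fun n => match n with O => s O | S _ => dzero A end)
                    (fun n => match n with O => dzero A | S _ => s n end)) as H.
  cbv beta in H.
  replace (fun n => dplus A (match n with O => s O | S _ => dzero A end)
                            (match n with O => dzero A | S _ => s n end)) with s in H;
    [exact H|].
  extensionality n. destruct n; simpl; [rewrite Hzero|rewrite Hcomm, Hzero]; reflexivity.
Qed.

(* [d(delta(s), 1/2 s_1) = 1/2 delta(s_2,s_3,...)]: axioms (i) and (iv). *)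
Lemma dist_delta_head (s : nat -> A) :
  ddist A (ddelta A s) (dhalf A (s O)) = dhalf A (ddelta A (fun m => s (S m))).
Proof.
  destruct (daxioms A) as [_ [Hdist [_ [_ [Hshift _]]]]].
  unfold dhalf at 1. rewrite Hdist, <- Hshift.
  f_equal. extensionality n. destruct n; reflexivity.
Qed.

Variable h : A -> R.
Hypothesis Hh : isMVhomTo01 A h.

(* [h(1/2 x) = h x / 2]: the two facts above with [s] constant, using (iii). *)
Lemma h_half x : h (dhalf A x) = h x / 2.
Proof.
  destruct (daxioms A) as [_ [_ [_ [Hconst _]]]].
  pose proof (h_le A h Hh _ _ (half_head_le (fun _ => x))) as Hle.
  pose proof (f_equal h (dist_delta_head (fun _ => x))) as E.
  cbv beta in Hle, E. rewrite Hconst in Hle, E.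
  rewrite (h_dist A h Hh), Rabs_pos_eq in E by lra. lra.
Qed.

Lemma h_delta_step (s : nat -> A) :
  h (ddelta A s) = h (s O) / 2 + h (ddelta A (fun m => s (S m))) / 2.
Proof.
  pose proof (h_le A h Hh _ _ (half_head_le s)) as Hle.
  pose proof (f_equal h (dist_delta_head s)) as E.
  rewrite h_half in Hle. rewrite (h_dist A h Hh), !h_half, Rabs_pos_eq in E by lra. lra.
Qed.

Lemma h_delta_series (s : nat -> A) :
  is_series (fun n => h (s n) / 2 ^ S n) (h (ddelta A s)).
Proof.
  apply (series_of_halving (fun n => h (s n)) (fun n => h (ddelta A (fun m => s (n + m)%nat)))).
  - intro n. apply (h_range A h Hh).
  - intro n. rewrite h_delta_step. rewrite Nat.add_0_r. do 4 f_equal.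
    extensionality m. rewrite Nat.add_succ_r. reflexivity.
Qed.
End DeltaValues.

(* The binary expansion of [r] in [0,1]: [bin_rem r n] is the remainder
   after [n] digits, and the [n]-th digit is 1 iff [bin_rem r n >= 1/2]. *)
Fixpoint bin_rem (r : R) (n : nat) : R :=
  match n with
  | O => r
  | S m => if Rle_dec (/2) (bin_rem r m) then 2 * bin_rem r m - 1 else 2 * bin_rem r m
  end.

Lemma bin_rem_range r : 0 <= r <= 1 -> forall n, 0 <= bin_rem r n <= 1.
Proof. intros Hr n. induction n; simpl; auto. destruct (Rle_dec (/2) (bin_rem r n)); lra. Qed.

(* The element [delta(digits of r)], which every homomorphism sends to [r]. *)
Definition dconst (A : deltaSig) (r : R) : A :=
  ddelta A (fun n => if Rle_dec (/2) (bin_rem r n) then done A else dzero A).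

Lemma h_dconst (A : deltaAlgebra) (h : A -> R) (Hh : isMVhomTo01 A h) r :
  0 <= r <= 1 -> h (dconst A r) = r.
Proof.
  intro Hr. unfold dconst. rewrite <- (is_series_unique _ _ (h_delta_series A h Hh _)).
  apply is_series_unique, (series_of_halving _ (bin_rem r) (bin_rem_range r Hr)). intro n.
  simpl. destruct (Rle_dec (/2) (bin_rem r n)).
  - rewrite (h_one A h Hh). lra.
  - rewrite (h_zero A h Hh). lra.
Qed.

(* [g] is within [d] of [f] at every coordinate in [l]; these sets are the
   basic neighbourhoods of [f] in the product topology on [T -> R]. *)
Definition near_on {T : Type} (l : list T) (d : R) (f g : T -> R) : Prop :=
  forall a, In a l -> Rabs (g a - f a) < d.

Definition prod_open {T : Type} (U : (T -> R) -> Prop) : Prop :=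
  forall f, U f -> exists l d, 0 < d /\ forall g, near_on l d f g -> U g.

Close Scope R_scope.

(* Tychonoff's theorem from MathComp-Analysis, transported to the elementary
   notion of openness above. *)
Module ProductCompactness.
Import all_boot all_order all_algebra all_classical all_reals.
Import topology normedtype Rstruct Rstruct_topology.
Import numFieldNormedType.Exports.
Import ArrowAsProduct.
Local Open Scope classical_set_scope.

(* A copy of an arbitrary type, equipped with the classical choice structure
   so that [carrier T -> R] carries the product topology. *)
Definition carrier (T : Type) := T.
HB.instance Definition _ (T : Type) := gen_eqMixin (carrier T).
HB.instance Definition _ (T : Type) := gen_choiceMixin (carrier T).
HB.instance Definition _ (T : Type) := isPointed.Build (carrier T -> R) (fun _ => 0%R).

Lemma near_on_nbhs (T : Type) (f : carrier T -> R) (l : list T) (d : R) : Rlt 0 d ->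
  nbhs f [set g : carrier T -> R | near_on l d f g].
Proof.
move=> d0; rewrite /near_on; elim: l => [|a l IH].
  by apply: filterS filterT => g _ a [].
have near_a : nbhs f [set g : carrier T -> R | Rlt (Rabs (Rminus (g a) (f a))) d].
  have near_proj : nbhs f (proj a @^-1` ball (f a) d) :=
    @proj_continuous (carrier T) (fun _ => R) a f (ball (f a) d)
      (nbhsx_ballx (f a) d (introT RltP d0)).
  apply: filterS near_proj => g /=; rewrite /ball /= /proj => /RltP gd.
  by rewrite Rabs_minus_sym.
have near_al := @filterI _ (nbhs f) (nbhs_filter f) _ _ near_a IH.
apply: filterS near_al => g [ga gl] b /= [<-|lb]; [exact: ga | exact: gl].
Qed.

Lemma prod_open_open (T : Type) (U : (carrier T -> R) -> Prop) :
  prod_open U -> open (U : set (carrier T -> R)).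
Proof.
move=> HU; rewrite openE => f Uf.
have [l [d [d0 Hd]]] := HU f Uf.
have near_f := @near_on_nbhs T f l d d0.
rewrite /interior; eapply filterS; last exact: near_f.
move=> g; exact: Hd.
Qed.

Theorem closed_cube_compact (T I : Type) (M : (T -> R) -> Prop)
    (U : I -> (T -> R) -> Prop) :
  (forall f, M f -> forall t, Rle 0 (f t) /\ Rle (f t) 1) ->
  prod_open (fun f => ~ M f) ->
  (forall i, prod_open (U i)) ->
  (forall f, M f -> exists i, U i f) ->
  exists li : list I, forall f, M f -> exists i, In i li /\ U i f.
Proof.
move=> Mcube Mclosed Uopen Mcov.
have cube_compact : compact [set f : carrier T -> R | forall t, (`[0%R, 1%R] : set R) (f t)].
  apply: (@tychonoff (carrier T) (fun _ => R) (fun _ => `[0%R, 1%R])) => t.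
  exact: segment_compact.
have M_compact : compact (M : set (carrier T -> R)).
  apply: (subclosed_compact _ cube_compact).
    rewrite -[M : set (carrier T -> R)]setCK; apply: open_closedC.
    by apply: prod_open_open.
  move=> f Mf t /=; rewrite in_itv /=; have [f0 f1] := Mcube f Mf t.
  by apply/andP; split; apply/RleP.
move: M_compact; rewrite compact_cover => M_compact.
have Uopen' : forall i, setT i -> open (U i : set (carrier T -> R)).
  by move=> i _; apply: prod_open_open.
have Mcov' : (M : set (carrier T -> R)) `<=` cover setT (U : carrier I -> _).
  by move=> f Mf; have [i Ui] := Mcov f Mf; exists i.
have [D _ HD] := M_compact (carrier I) setT U Uopen' Mcov'.
exists (finmap.enum_fset D) => f Mf.
have [i Di Ui] := HD f Mf.
exists i; split => //.
have : i \in finmap.enum_fset D := Di.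
elim: (finmap.enum_fset D) => //= j s IH.
by rewrite inE => /orP [/eqP->|/IH]; [left | right].
Qed.
End ProductCompactness.

Open Scope R_scope.

Lemma uplus_lipschitz x y x' y' :
  Rabs (uplus x y - uplus x' y') <= Rabs (x - x') + Rabs (y - y').
Proof.
  unfold uplus, Rmin.
  destruct (Rle_dec 1 (x + y)), (Rle_dec 1 (x' + y')); split_Rabs; lra.
Qed.

Lemma lipschitz_identity_fails_nearby (T : Type) (phi : R -> R -> R)
    (f : T -> R) (a b c : T) :
  (forall x y x' y', Rabs (phi x y - phi x' y') <= Rabs (x - x') + Rabs (y - y')) ->
  f c <> phi (f a) (f b) ->
  exists l d, 0 < d /\ forall g, near_on l d f g -> g c <> phi (g a) (g b).
Proof.
  intros Hlip Hneq. set (m := Rabs (f c - phi (f a) (f b))).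
  assert (Hm : 0 < m) by (apply Rabs_pos_lt; lra).
  exists (c :: a :: b :: nil), (m / 3). split; [lra|].
  intros g Hnear Heq.
  pose proof (Hnear c (or_introl eq_refl)).
  pose proof (Hnear a (or_intror (or_introl eq_refl))).
  pose proof (Hnear b (or_intror (or_intror (or_introl eq_refl)))).
  pose proof (Hlip (g a) (g b) (f a) (f b)).
  rewrite Heq in *. unfold m in *.
  revert Hm. generalize (phi (g a) (g b)) (phi (f a) (f b)). intros. split_Rabs; lra.
Qed.

Lemma range_fails_nearby (T : Type) (f : T -> R) (a : T) :
  ~ (0 <= f a <= 1) -> exists l d, 0 < d /\ forall g, near_on l d f g -> ~ (0 <= g a <= 1).
Proof.
  intro Hout. exists (a :: nil), (Rmax (- f a) (f a - 1)). split.
  - apply Rnot_le_lt. intro Hle. apply Hout.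
    pose proof (Rmax_l (- f a) (f a - 1)); pose proof (Rmax_r (- f a) (f a - 1)); lra.
  - intros g Hnear Hin. specialize (Hnear a (or_introl eq_refl)).
    unfold Rmax in Hnear. destruct (Rle_dec _ _); split_Rabs; lra.
Qed.

Lemma MaxA_closed (A : deltaSig) : prod_open (fun f : A -> R => ~ isMVhomTo01 A f).
Proof.
  intros f Hf. unfold isMVhomTo01 in Hf.
  destruct (classic (forall a, 0 <= f a <= 1)) as [Hrange|Hrange].
  2:{ apply not_all_ex_not in Hrange as [a Ha].
      destruct (range_fails_nearby A f a Ha) as (l & d & Hd & Hg).
      exists l, d. split; [exact Hd|]. intros g Hnear [Hr _]. exact (Hg g Hnear (Hr a)). }
  destruct (classic (forall a b, f (dplus A a b) = uplus (f a) (f b))) as [Hplus|Hplus].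
  2:{ apply not_all_ex_not in Hplus as [a Hplus]. apply not_all_ex_not in Hplus as [b Hab].
      destruct (lipschitz_identity_fails_nearby A uplus f a b (dplus A a b) uplus_lipschitz Hab)
        as (l & d & Hd & Hg).
      exists l, d. split; [exact Hd|]. intros g Hnear (_ & Hp & _). exact (Hg g Hnear (Hp a b)). }
  destruct (classic (forall a, f (dneg A a) = uneg (f a))) as [Hneg|Hneg].
  2:{ apply not_all_ex_not in Hneg as [a Ha].
      destruct (lipschitz_identity_fails_nearby A (fun x _ => uneg x) f a a (dneg A a))
        as (l & d & Hd & Hg);
        [intros; unfold uneg; split_Rabs; lra|exact Ha|].
      exists l, d. split; [exact Hd|]. intros g Hnear (_ & _ & Hn & _). exact (Hg g Hnear (Hn a)). }
  assert (Hz : f (dzero A) <> 0) by tauto.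
  destruct (lipschitz_identity_fails_nearby A (fun _ _ => 0) f (dzero A) (dzero A) (dzero A))
    as (l & d & Hd & Hg); [intros; rewrite Rminus_diag, Rabs_R0; split_Rabs; lra|exact Hz|].
  exists l, d. split; [exact Hd|]. intros g Hnear (_ & _ & _ & H0). exact (Hg g Hnear H0).
Qed.

Definition max_open (A : deltaSig) (U : MaxA A -> Prop) : Prop :=
  forall h, U h -> exists l d, 0 < d /\
    forall h' : MaxA A, near_on l d (proj1_sig h) (proj1_sig h') -> U h'.

Lemma MaxA_compact (A : deltaSig) (I : Type) (U : I -> MaxA A -> Prop) :
  (forall i, max_open A (U i)) -> (forall h, exists i, U i h) ->
  exists li : list I, forall h, exists i, In i li /\ U i h.
Proof.
  intros Uopen Ucov.
  (* [W i] is an open set of functions whose trace on [Max A] lies in [U i]. *)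
  set (W := fun i (f : A -> R) => exists l d, 0 < d /\
              forall h' : MaxA A, near_on l d f (proj1_sig h') -> U i h').
  destruct (ProductCompactness.closed_cube_compact A I (isMVhomTo01 A) W) as [li Hli].
  - intros f Hf. apply (h_range A f Hf).
  - apply MaxA_closed.
  - intros i f (l & d & Hd & HU). exists l, (d / 2). split; [lra|].
    intros g Hg. exists l, (d / 2). split; [lra|].
    intros h' Hh'. apply HU. intros a Ha.
    pose proof (Hg a Ha); pose proof (Hh' a Ha). split_Rabs; lra.
  - intros f Hf. destruct (Ucov (exist _ f Hf)) as [i Hi].
    destruct (Uopen i _ Hi) as (l & d & Hd & HU). exists i, l, d. auto.
  - exists li. intro h. destruct (Hli (proj1_sig h) (proj2_sig h)) as (i & Hin & l & d & Hd & HU).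
    exists i. split; [exact Hin|]. apply HU. intros a _. rewrite Rminus_diag, Rabs_R0. exact Hd.
Qed.

Section Continuity.
Variable A : deltaSig.

Lemma contMax_hat a : contMax A (hat A a).
Proof.
  intros h eps Heps. exists (a :: nil), eps. split; [exact Heps|].
  intros h' H. apply H. left; reflexivity.
Qed.

Lemma contMax_add_const (F : MaxA A -> R) c : contMax A F -> contMax A (fun h => F h + c).
Proof.
  intros HF h eps Heps. destruct (HF h eps Heps) as (l & d & Hd & H).
  exists l, d. split; [exact Hd|]. intros h' H'. specialize (H h' H').
  replace (F h' + c - (F h + c)) with (F h' - F h) by ring. exact H.
Qed.

Lemma contMax_lt_open (P Q : MaxA A -> R) :
  contMax A P -> contMax A Q -> max_open A (fun h => P h < Q h).
Proof.
  intros HP HQ h Hlt. set (m := Q h - P h).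
  destruct (HP h (m / 2)) as (l1 & d1 & Hd1 & H1); [unfold m; lra|].
  destruct (HQ h (m / 2)) as (l2 & d2 & Hd2 & H2); [unfold m; lra|].
  exists (l1 ++ l2), (Rmin d1 d2). split; [apply Rmin_glb_lt; auto|].
  intros h' Hh'.
  assert (Rabs (P h' - P h) < m / 2).
  { apply H1. intros a Ha. eapply Rlt_le_trans; [apply Hh', in_or_app; auto|apply Rmin_l]. }
  assert (Rabs (Q h' - Q h) < m / 2).
  { apply H2. intros a Ha. eapply Rlt_le_trans; [apply Hh', in_or_app; auto|apply Rmin_r]. }
  unfold m in *. split_Rabs; lra.
Qed.

Lemma finite_subcover_lt (I : Type) (S : I -> Prop) (P Q : I -> MaxA A -> R) :
  (forall i, contMax A (P i)) -> (forall i, contMax A (Q i)) ->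
  (forall h, exists i, S i /\ P i h < Q i h) ->
  exists li, (forall i, In i li -> S i) /\ forall h, exists i, In i li /\ P i h < Q i h.
Proof.
  intros HP HQ Hcov.
  destruct (MaxA_compact A {i | S i} (fun j h => P (proj1_sig j) h < Q (proj1_sig j) h))
    as [lj Hlj].
  - intro j. apply contMax_lt_open; auto.
  - intro h. destruct (Hcov h) as (i & Si & Hi). exists (exist _ i Si). exact Hi.
  - exists (map (@proj1_sig _ _) lj). split.
    + intros i Hi. apply in_map_iff in Hi as (j & <- & _). apply proj2_sig.
    + intro h. destruct (Hlj h) as (j & Hin & Hj). exists (proj1_sig j).
      split; [apply in_map; exact Hin|exact Hj].
Qed.
End Continuity.

Section Density.
Variable A : deltaAlgebra.

Lemma hat_hom (h : MaxA A) : isMVhomTo01 A (proj1_sig h).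
Proof. exact (proj2_sig h). Qed.

Lemma MaxA_ext (x y : MaxA A) : (forall a, hat A a x = hat A a y) -> x = y.
Proof.
  destruct x as [fx Hx], y as [fy Hy]. unfold hat. simpl. intro Heq.
  assert (fx = fy) as <- by (extensionality a; apply Heq).
  f_equal. apply proof_irrelevance.
Qed.

(* Any two distinct points are separated by an element taking values 0 and 1:
   push [c] below the midpoint constant, then multiply. *)
Lemma separating_element (x y : MaxA A) (c : A) : hat A c x < hat A c y ->
  exists u, hat A u x = 0 /\ hat A u y = 1.
Proof.
  unfold hat. intro Hc.
  pose proof (h_range A _ (hat_hom x) c). pose proof (h_range A _ (hat_hom y) c).
  set (r := (proj1_sig x c + proj1_sig y c) / 2).
  assert (Hr : 0 <= r <= 1) by (unfold r; lra).
  set (v := dominus A c (dconst A r)).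
  set (m := (proj1_sig y c - proj1_sig x c) / 2).
  assert (Hvx : proj1_sig x v = 0).
  { unfold v. rewrite (h_ominus A _ (hat_hom x)), (h_dconst A _ (hat_hom x) r Hr).
    unfold r, Rmax. destruct (Rle_dec _ _); lra. }
  assert (Hvy : proj1_sig y v = m).
  { unfold v. rewrite (h_ominus A _ (hat_hom y)), (h_dconst A _ (hat_hom y) r Hr).
    unfold r, m, Rmax. destruct (Rle_dec _ _); lra. }
  assert (Hm : 0 < m) by (unfold m; lra).
  destruct (nfloor_ex (/ m)) as [n [_ Hn]]; [left; apply Rinv_0_lt_compat, Hm|].
  assert (Hbig : 1 <= INR (S n) * m).
  { rewrite S_INR. apply Rmult_lt_compat_r with (r := m) in Hn; [|exact Hm].
    rewrite Rinv_l in Hn; lra. }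
  exists (nfold A (S n) v).
  rewrite (h_nfold A _ (hat_hom x)), (h_nfold A _ (hat_hom y)), Hvx, Hvy, Rmult_0_r.
  unfold Rmin. split; destruct (Rle_dec _ _); lra.
Qed.

Lemma separating_pair (x y : MaxA A) : x <> y -> exists u, hat A u x = 0 /\ hat A u y = 1.
Proof.
  intro Hxy. destruct (classic (exists c, hat A c x <> hat A c y)) as [[c Hc]|Hall].
  2:{ exfalso. apply Hxy, MaxA_ext. intro a. apply NNPP. intro Ha. apply Hall. exists a. exact Ha. }
  destruct (Rlt_le_dec (hat A c x) (hat A c y)) as [Hlt|Hle].
  - exact (separating_element x y c Hlt).
  - destruct (separating_element y x c) as (u & Huy & Hux); [lra|].
    exists (dneg A u). unfold hat in *.
    rewrite (h_neg A _ (hat_hom x)), (h_neg A _ (hat_hom y)). lra.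
Qed.

(* Two-point interpolation: every [F : Max A -> [0,1]] agrees with some [hat a]
   at any two given points, namely [a = (u /\ F y) \/ (~u /\ F x)]. *)
Lemma interpolate_two_points (F : MaxA A -> R) (HF : forall h, 0 <= F h <= 1) (x y : MaxA A) :
  exists a, hat A a x = F x /\ hat A a y = F y.
Proof.
  destruct (classic (x = y)) as [<-|Hxy].
  - exists (dconst A (F x)). unfold hat. rewrite (h_dconst A _ (hat_hom x)) by auto. auto.
  - destruct (separating_pair x y Hxy) as (u & Hux & Huy).
    exists (djoin A (dmeet A u (dconst A (F y))) (dmeet A (dneg A u) (dconst A (F x)))).
    unfold hat in *. pose proof (HF x); pose proof (HF y).
    rewrite (h_join A _ (hat_hom x)), (h_join A _ (hat_hom y)),
      !(h_meet A _ (hat_hom x)), !(h_meet A _ (hat_hom y)),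
      (h_neg A _ (hat_hom x)), (h_neg A _ (hat_hom y)),
      !(h_dconst A _ (hat_hom x)), !(h_dconst A _ (hat_hom y)), Hux, Huy by auto.
    split; case_minmax.
Qed.

Variables (F : MaxA A -> R) (eps : R).
Hypotheses (HF : inC A F) (Heps : 0 < eps).

(* Approximation from above, exact up to [eps] at one point [x]: the meet of
   finitely many two-point interpolants, chosen by compactness. *)
Lemma approx_above_at (x : MaxA A) :
  exists g, F x - eps < hat A g x /\ forall z, hat A g z < F z + eps.
Proof.
  destruct HF as [HFc HFr].
  destruct (finite_subcover_lt A A (fun a => F x - eps < hat A a x)
              (hat A) (fun _ z => F z + eps)) as (la & Hla & Hcov).
  - apply contMax_hat.
  - intro. apply contMax_add_const, HFc.
  - intro z. destruct (interpolate_two_points F HFr x z) as (a & Hax & Haz).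
    exists a. lra.
  - exists (bigmeet A la). unfold hat in *. split.
    + apply (h_bigmeet_gt A _ (hat_hom x)); [pose proof (HFr x); lra|exact Hla].
    + intro z. destruct (Hcov z) as (a & Hin & Ha).
      pose proof (h_bigmeet_le A _ (hat_hom z) a la Hin). lra.
Qed.

(* Lattice Stone-Weierstrass: the image of [eta] is uniformly dense in
   [C(Max A,[0,1])]; take the join of finitely many [approx_above_at]. *)
Lemma density : exists a, forall h, Rabs (hat A a h - F h) < eps.
Proof.
  destruct HF as [HFc HFr].
  destruct (finite_subcover_lt A A (fun g => forall z, hat A g z < F z + eps)
              (fun _ z => F z + - eps) (hat A)) as (lg & Hlg & Hcov).
  - intro. apply contMax_add_const, HFc.
  - apply contMax_hat.
  - intro x. destruct (approx_above_at x) as (g & Hgx & Hg). exists g. split; [exact Hg|lra].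
  - exists (bigjoin A lg). intro z. unfold hat in *.
    assert (F z - eps < proj1_sig z (bigjoin A lg)).
    { destruct (Hcov z) as (g & Hin & Hg).
      pose proof (h_bigjoin_ge A _ (hat_hom z) g lg Hin). lra. }
    assert (proj1_sig z (bigjoin A lg) < F z + eps).
    { apply (h_bigjoin_lt A _ (hat_hom z)); [pose proof (HFr z); lra|].
      intros g Hin. apply Hlg, Hin. }
    split_Rabs; lra.
Qed.
End Density.

Section Completeness.
Variable A : deltaAlgebra.

(* [delta(2^(k+1) (b_k - a_k))]: the positive parts of the increments
   [b_k - a_k], rescaled so that [delta] sums them without overflow. *)
Definition increment_sum (a b : nat -> A) : A :=
  ddelta A (fun k => nfold A (2 ^ S k) (dominus A (b k) (a k))).

(* The limit of a sequence [(a_k)] whose values move by at most [2^-(k+1)]: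
   [2 ((1/2 a_0 (+) 1/2 P) (-) 1/2 N)], where [P] and [N] collect the positive
   and negative increments. *)
Definition delta_limit (a : nat -> A) : A :=
  let P := increment_sum a (fun k => a (S k)) in
  let N := increment_sum (fun k => a (S k)) a in
  let b := dominus A (dplus A (dhalf A (a O)) (dhalf A P)) (dhalf A N) in
  dplus A b b.

Variable h : A -> R.
Hypothesis Hh : isMVhomTo01 A h.

Lemma h_increment_sum (a b : nat -> A) :
  (forall k, h (b k) - h (a k) <= / 2 ^ S k) ->
  is_series (fun k => Rmax 0 (h (b k) - h (a k))) (h (increment_sum a b)).
Proof.
  intro Hinc.
  apply is_series_ext
    with (fun k => h (nfold A (2 ^ S k) (dominus A (b k) (a k))) / 2 ^ S k);
    [|apply (h_delta_series A h Hh)].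
  intro k. pose proof (two_pow_pos (S k)) as Hpow.
  assert (Hbound : 2 ^ S k * Rmax 0 (h (b k) - h (a k)) <= 1).
  { rewrite <- (Rinv_r (2 ^ S k)) by (apply Rgt_not_eq; exact Hpow).
    apply Rmult_le_compat_l; [lra|].
    apply Rmax_lub; [apply Rlt_le, Rinv_0_lt_compat, Hpow|apply Hinc]. }
  assert (Hnat : INR (2 ^ S k) = 2 ^ S k) by (rewrite pow_INR; reflexivity).
  assert (Hexact : h (nfold A (2 ^ S k) (dominus A (b k) (a k)))
                   = 2 ^ S k * Rmax 0 (h (b k) - h (a k))).
  { rewrite <- Hnat, <- (h_ominus A h Hh). apply (h_nfold_exact A h Hh).
    rewrite Hnat, (h_ominus A h Hh). exact Hbound. }
  rewrite Hexact. apply Rmult_div_r, Rgt_not_eq, Hpow.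
Qed.

(* [delta_limit a] is evaluated by every [h] to [lim h(a_k)]: the increment
   series telescope to [L - h(a_0)]. *)
Lemma h_delta_limit (a : nat -> A) (L : R) :
  (forall k, Rabs (h (a (S k)) - h (a k)) <= / 2 ^ S k) ->
  is_lim_seq (fun k => h (a k)) L -> 0 <= L <= 1 ->
  h (delta_limit a) = L.
Proof.
  intros Hstep Hlim HL. unfold delta_limit; cbv zeta.
  set (P := increment_sum a (fun k => a (S k))).
  set (N := increment_sum (fun k => a (S k)) a).
  assert (HP : is_series (fun k => Rmax 0 (h (a (S k)) - h (a k))) (h P)).
  { apply h_increment_sum. intro k. specialize (Hstep k). split_Rabs; lra. }
  assert (HN : is_series (fun k => Rmax 0 (h (a k) - h (a (S k)))) (h N)).
  { apply h_increment_sum. intro k. specialize (Hstep k). split_Rabs; lra. }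
  assert (Htotal : h P - h N = L - h (a O)).
  { assert (Hdiff : is_series (fun k => Rmax 0 (h (a (S k)) - h (a k))
                                        - Rmax 0 (h (a k) - h (a (S k)))) (h P - h N))
      by exact (is_series_minus _ _ _ _ HP HN).
    rewrite <- (is_series_unique _ _ Hdiff).
    rewrite <- (is_series_unique _ _ (series_of_increments _ _ Hlim)).
    apply Series_ext. intro k. case_minmax. }
  pose proof (h_range A h Hh P). pose proof (h_range A h Hh N). pose proof (h_range A h Hh (a O)).
  rewrite (h_plus A h Hh), (h_ominus A h Hh), (h_plus A h Hh), !(h_half A h Hh).
  case_minmax.
Qed.
End Completeness.

(* [eta_A] is onto [C(Max A,[0,1])]: approximate [F] within [2^-(k+2)] by
   [hat a_k] (density) and take [delta_limit a]. *)
Theorem eta_surjective (A : deltaAlgebra) (F : MaxA A -> R) :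
  inC A F -> exists c, hat A c = F.
Proof.
  intro HF.
  assert (Happrox : forall k, exists a, forall h, Rabs (hat A a h - F h) < / 2 ^ S (S k)).
  { intro k. apply density; [exact HF|]. apply Rinv_0_lt_compat, two_pow_pos. }
  destruct (functional_choice _ Happrox) as [a Ha].
  exists (delta_limit A a). extensionality h. unfold hat at 1.
  apply (h_delta_limit A _ (hat_hom A h)); [| |apply HF].
  - intro k. pose proof (Ha k h); pose proof (Ha (S k) h). unfold hat in *.
    rewrite !inv_pow2_S in *. pose proof (Rinv_0_lt_compat _ (two_pow_pos k)).
    split_Rabs; lra.
  - assert (Hrate : is_lim_seq (fun k => / 2 ^ S (S k)) 0)
      by exact (proj1 (is_lim_seq_incr_1 _ _) inv_pow2_lim).
    apply is_lim_seq_le_le with (fun k => F h - / 2 ^ S (S k)) (fun k => F h + / 2 ^ S (S k)).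
    + intro k. pose proof (Ha k h). unfold hat in *. split_Rabs; lra.
    + pose proof (is_lim_seq_minus' _ _ _ _ (is_lim_seq_const (F h)) Hrate) as H.
      rewrite Rminus_0_r in H. exact H.
    + pose proof (is_lim_seq_plus' _ _ _ _ (is_lim_seq_const (F h)) Hrate) as H.
      rewrite Rplus_0_r in H. exact H.
Qed.

Lemma eta_is_delta_hom (A : deltaAlgebra) : etaIsDeltaHom A.
Proof.
  split; [|split; [|split; [|split]]].
  - intro a. split; [apply contMax_hat|]. intro h. apply (h_range A _ (hat_hom A h)).
  - intros a b. extensionality h. apply (h_plus A _ (hat_hom A h)).
  - intro a. extensionality h. apply (h_neg A _ (hat_hom A h)).
  - extensionality h. apply (h_zero A _ (hat_hom A h)).
  - intro s. extensionality h. unfold hat, Cdelta. symmetry.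
    apply is_series_unique, (h_delta_series A _ (hat_hom A h)).
Qed.

Theorem mainTheorem8 (A : deltaAlgebra) :
  etaIsDeltaHom A /\
  (forall (B : deltaAlgebra) (f g : (MaxA A -> R) -> B),
     isDeltaHomFromC A B f -> isDeltaHomFromC A B g ->
     (forall a : A, f (hat A a) = g (hat A a)) ->
     forall F : MaxA A -> R, inC A F -> f F = g F).
Proof.
  split; [apply eta_is_delta_hom|].
  intros B f g _ _ Hfg F HF.
  destruct (eta_surjective A F HF) as [c <-]. apply Hfg.
Qed.
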